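(* Fix a constant $0<\alpha<1$. For $D\le \alpha n$, the minimum size of advice sufficient to perform topology recognition in time $D$ in the class of graphs of size $n$ and diameter $D$ is in $\Theta(n\log n)$ (the upper bound holds for labeled topology recognition and the lower bound for anonymous topology recognition), with constants depending only on $\alpha$.
   Context: Graphs are finite, simple, undirected, connected, with no node labels; at each node of degree $d$ the incident edges carry distinct port numbers $0,\dots,d-1$ (no coherence between endpoints). Isomorphism is a bijection of nodes preserving edges and port numbers at both endpoints. Size = number of nodes; $\log$ is base 2. Communication model (LOCAL): synchronous rounds, all nodes start simultaneously; in each round every node may send arbitrary messages to all neighbours, receives their messages (knowing the arrival port), and performs arbitrary local computation. Initially a node knows only its degree and its advice. Advice: an oracle knowing the graph assigns each node a binary string; the size of advice is the maximum string length. All nodes run the same deterministic algorithm. Anonymous topology recognition: every node outputs a port-labeled graph isomorphic to $G$. Labeled topology recognition: all nodes output the same port-labeled graph $H$ with distinct node labels and each node its own label, such that some isomorphism $G\to H$ maps every node to the node carrying the label it output. The minimum size of advice sufficient for time $T$ on a class is the least $s$ such that some deterministic algorithm and, for each graph of the class, some advice assignment of size at most $s$ accomplish the task within $T$ rounds on every graph of the class. *)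

From Stdlib Require Import Reals.
From mathcomp Require Import all_boot.

Set Implicit Arguments.
Unset Strict Implicit.
Unset Printing Implicit Defensive.

(* A graph on nodes 0..n-1 is a list of n adjacency lists: the list    *)
(* [nbr G v] enumerates the neighbours of v, and the neighbour at      *)
(* position p is the one reached through port p of v.  Thus the degree *)
Definition pgraph := seq (seq nat).

Definition gsize (G : pgraph) : nat := size G.
Definition nbr (G : pgraph) (v : nat) : seq nat := nth [::] G v.
Definition deg (G : pgraph) (v : nat) : nat := size (nbr G v).

Fixpoint within (G : pgraph) (u v : nat) (k : nat) : bool :=
  match k with
  | 0 => u == v
  | k'.+1 => within G u v k' || has (fun w => within G w v k') (nbr G u)
  end.

Definition connected (G : pgraph) : Prop :=
  exists k, forall u v, u < gsize G -> v < gsize G -> within G u v k.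

Definition wf_pgraph (G : pgraph) : Prop :=
  (forall v, v < gsize G ->
     [/\ all (fun u => u < gsize G) (nbr G v),
         uniq (nbr G v),
         v \notin nbr G v &
         forall u, u < gsize G -> (u \in nbr G v) = (v \in nbr G u)])
  /\ connected G.

Definition has_diameter (G : pgraph) (D : nat) : Prop :=
  (forall u v, u < gsize G -> v < gsize G -> within G u v D) /\
  (forall D', D' < D ->
     exists u v, [/\ u < gsize G, v < gsize G & ~~ within G u v D']).

Definition in_class (n D : nat) (G : pgraph) : Prop :=
  [/\ wf_pgraph G, gsize G = n & has_diameter G D].

Definition iso_map (G H : pgraph) (f : nat -> nat) : Prop :=
  [/\ gsize G = gsize H,
      forall v, v < gsize G -> f v < gsize H,
      forall u v, u < gsize G -> v < gsize G -> f u = f v -> u = v &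
      forall v, v < gsize G -> map f (nbr G v) = nbr H (f v)].

Definition isomorphic (G H : pgraph) : Prop := exists f, iso_map G H f.

(* A deterministic algorithm (the same at every node): arbitrary state *)
(* and message types; the initial state depends only on the degree and *)
(* the advice string; in each round a node sends on each port p the    *)
(* message [send s p], then receives the list of messages indexed by   *)
(* arrival port and computes its new state.  [out s = Some o] means     *)
(* the node outputs o (its first such output counts).                  *)
Record algo (Out : Type) := Algo {
  St : Type;
  Msg : Type;
  init : nat -> seq bool -> St;
  send : St -> nat -> Msg;
  recv : St -> seq Msg -> St;
  out : St -> option Out
}.

Arguments St {Out} a.
Arguments Msg {Out} a.
Arguments init {Out} a _ _.
Arguments send {Out} a _ _.
Arguments recv {Out} a _ _.
Arguments out {Out} a _.

Definition advice := nat -> seq bool.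

Fixpoint state (Out : Type) (A : algo Out) (G : pgraph) (adv : advice) (r v : nat)
  : St A :=
  match r with
  | 0 => init A (deg G v) (adv v)
  | r'.+1 =>
      recv A (state A G adv r' v)
        [seq send A (state A G adv r' u) (index v (nbr G u)) | u <- nbr G v]
  end.

Definition outputs_within Out (A : algo Out) G adv (T v : nat) (o : Out)
  : Prop :=
  exists r, [/\ r <= T, out A (state A G adv r v) = Some o &
                forall r', r' < r -> out A (state A G adv r' v) = None].

Definition advice_size_le (G : pgraph) (adv : advice) (s : nat) : Prop :=
  forall v, v < gsize G -> size (adv v) <= s.

Definition solves_anon (A : algo pgraph) G adv (T : nat) : Prop :=
  forall v, v < gsize G ->
    exists H, outputs_within A G adv T v H /\ isomorphic G H.

(* Labeled topology recognition: all nodes output the same graph H with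
   distinct node labels (label of node i of H is [nth 0 lab i]) and each
   node its own label, consistently with some isomorphism G -> H. *)
Definition solves_lab (A : algo ((pgraph * seq nat) * nat)) G adv (T : nat)
  : Prop :=
  exists (H : pgraph) (lab : seq nat) (f : nat -> nat),
    [/\ size lab = gsize H, uniq lab, iso_map G H f &
        forall v, v < gsize G ->
          outputs_within A G adv T v ((H, lab), nth 0 lab (f v))].

Definition sufficient_anon (n D T s : nat) : Prop :=
  exists A : algo pgraph, forall G, in_class n D G ->
    exists adv, advice_size_le G adv s /\ solves_anon A G adv T.

Definition sufficient_lab (n D T s : nat) : Prop :=
  exists A : algo ((pgraph * seq nat) * nat), forall G, in_class n D G ->
    exists adv, advice_size_le G adv s /\ solves_lab A G adv T.

Definition nlogn (n : nat) : R := Rmult (INR n) (Rdiv (ln (INR n)) (ln 2)).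

(* Upper bound: node [v] is told [n], [D], its name [v] and its adjacency list,
   each number written on [log n + 1] bits, i.e. O(n log n) bits; flooding the
   adjacency lists for [D] rounds lets every node rebuild the labeled graph.
   Lower bound: glue a path [0, ..., D - 1] to a clique on [m = n - D] nodes and
   order the ports inside the clique arbitrarily.  This gives [((m - 1)!)^m]
   distinct graphs, and within [D] rounds node 0 cannot see the clique ports, so
   its output depends on the advice only; the advice of all nodes together with
   the isomorphism onto that output therefore determines the graph.  Hence
   [((m - 1)!)^m <= n^n 2^((s + 1) n)] for advice size [s], and since
   [m >= (1 - alpha) n], [s = Omega(m log m) = Omega(n log n)]. *)

From Stdlib Require Import Reals Lra Lia.
From mathcomp Require Import all_boot zify.

Set Implicit Arguments.
Unset Strict Implicit.
Unset Printing Implicit Defensive.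

(** * Locality *)

Lemma within_mono G u v k k' : k <= k' -> within G u v k -> within G u v k'.
Proof.
move=> /subnK <-; elim: (k' - k) => [//|d IH] Hk.
by rewrite addSn /= IH.
Qed.

Lemma within_refl G v k : within G v v k.
Proof. by apply: (@within_mono G v v 0) => //=. Qed.

Lemma within_trans G a b c k1 k2 :
  within G a b k1 -> within G b c k2 -> within G a c (k1 + k2).
Proof.
elim: k1 a => [|k1 IH] a /=; first by move/eqP->.
move=> /orP [Hab|/hasP [x Hx Hxb]] Hbc; first by rewrite IH.
by apply/orP; right; apply/hasP; exists x => //; apply: IH.
Qed.

Lemma within1 G a b : b \in nbr G a -> within G a b 1.
Proof. by move=> Hb /=; apply/orP; right; apply/hasP; exists b. Qed.

Lemma within_rcons G v u w k :
  within G v u k -> w \in nbr G u -> within G v w k.+1.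
Proof. by move=> Hu /within1 Hw; rewrite -addn1; apply: within_trans Hw. Qed.

Lemma within_sym G u v k : (forall a b, b \in nbr G a -> a \in nbr G b) ->
  within G u v k -> within G v u k.
Proof.
move=> Gsym; elim: k u => [|k IH] u /=; first by rewrite eq_sym.
move=> /orP [/IH Hvu|/hasP [w Hw /IH Hvw]]; first by rewrite /= Hvu.
exact: within_rcons Hvw (Gsym _ _ Hw).
Qed.

Lemma deg_le_gsize G v : wf_pgraph G -> v < gsize G -> deg G v <= gsize G.
Proof.
move=> [Gwf _] Hv; have [Hall Huniq _ _] := Gwf v Hv.
rewrite -(size_iota 0 (gsize G)); apply: uniq_leq_size => // u Hu.
by rewrite mem_iota; have := allP Hall u Hu.
Qed.

Section Locality.

Variables (Out : Type) (A : algo Out) (G G' : pgraph) (adv adv' : advice).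
Variables (v T : nat).

(* The message [w] sends to [u] leaves through port [index u (nbr G w)], so the
   far ends of the edges leaving the ball must agree on their port numbers. *)
Hypothesis nbr_ball : forall u, within G v u T.-1 -> nbr G u = nbr G' u.
Hypothesis deg_ball : forall u, within G v u T -> deg G u = deg G' u.
Hypothesis adv_ball : forall u, within G v u T -> adv u = adv' u.
Hypothesis port_ball : forall u w, within G v u T.-1 -> w \in nbr G u ->
  index u (nbr G w) = index u (nbr G' w).

Lemma state_local_ball r u : r <= T -> within G v u (T - r) ->
  state A G adv r u = state A G' adv' r u.
Proof.
elim: r u => [|r IH] u Hr Hu /=; first by rewrite subn0 in Hu; rewrite deg_ball ?adv_ball.
have Hu1 : within G v u T.-1 by apply: within_mono Hu; lia.
rewrite -nbr_ball // IH; [|lia|by apply: within_mono Hu; lia].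
congr (recv A _ _); apply/eq_in_map => w Hw.
rewrite port_ball // IH //; first lia.
by apply: within_mono (within_rcons Hu Hw); lia.
Qed.

Lemma state_local r : r <= T -> state A G adv r v = state A G' adv' r v.
Proof. by move=> Hr; apply: state_local_ball => //; apply: within_refl. Qed.

End Locality.

Lemma outputs_within_det Out (A : algo Out) G G' adv adv' T v o o' :
  (forall r, r <= T -> out A (state A G adv r v) = out A (state A G' adv' r v)) ->
  outputs_within A G adv T v o -> outputs_within A G' adv' T v o' -> o = o'.
Proof.
move=> E [r1 [H1 O1 N1]] [r2 [H2 O2 N2]].
case: (ltngtP r1 r2) => [lt|lt|eq].
- by move: (N2 _ lt); rewrite -E ?O1 //; lia.
- by move: (N1 _ lt); rewrite E ?O2 //; lia.
- by subst; rewrite E // O2 in O1; case: O1.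
Qed.

(** * Labeled recognition by flooding *)

Fixpoint bits (w k : nat) : seq bool :=
  if w is w'.+1 then odd k :: bits w' k./2 else [::].

Fixpoint bits_val (bs : seq bool) : nat :=
  if bs is b :: bs' then b + (bits_val bs').*2 else 0.

Lemma size_bits w k : size (bits w k) = w.
Proof. by elim: w k => //= w IH k; rewrite IH. Qed.

Lemma bitsK w k : k < 2 ^ w -> bits_val (bits w k) = k.
Proof.
elim: w k => [|w IH] k /=; first by rewrite expn0; lia.
rewrite expnS => Hk; rewrite IH; first by rewrite -[RHS](odd_double_half k).
by have := odd_double_half k; lia.
Qed.

(* [fuel] only bounds the recursion; the size of the input is always enough. *)
Fixpoint split_bits (w fuel : nat) (bs : seq bool) : seq nat :=
  if fuel is f.+1 then
    if bs is [::] then [::] else bits_val (take w bs) :: split_bits w f (drop w bs)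
  else [::].

Lemma size_flatten_bits w xs : size (flatten (map (bits w) xs)) = w * size xs.
Proof. by elim: xs => [|x xs IH] /=; rewrite ?muln0 // size_cat IH size_bits mulnS. Qed.

Lemma split_bitsK w xs fuel : 0 < w -> size xs <= fuel ->
  all (fun x => x < 2 ^ w) xs -> split_bits w fuel (flatten (map (bits w) xs)) = xs.
Proof.
move=> Hw; elim: xs fuel => [|x xs IH] [|f] //= Hs /andP [Hx Hxs].
have Sz : size (bits w x) = w by rewrite size_bits.
case E: (bits w x ++ _) => [|b l].
  by exfalso; move/(congr1 size): E; rewrite size_cat Sz /=; lia.
by rewrite -E -{1}Sz take_size_cat // -{2}Sz drop_size_cat // bitsK // Sz IH //; lia.
Qed.

(* A self-delimiting code: the width [w] in unary, then [w] bits per number. *)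
Definition encode (w : nat) (xs : seq nat) : seq bool :=
  nseq w true ++ false :: flatten (map (bits w) xs).

Definition decode (bs : seq bool) : seq nat :=
  let w := find negb bs in split_bits w (size bs) (drop w.+1 bs).

Lemma size_encode w xs : size (encode w xs) = w + 1 + w * size xs.
Proof. by rewrite size_cat size_nseq /= size_flatten_bits; lia. Qed.

Lemma encodeK w xs : 0 < w -> all (fun x => x < 2 ^ w) xs -> decode (encode w xs) = xs.
Proof.
move=> Hw Hxs; rewrite /decode /encode.
rewrite find_cat has_nseq /= find_nseq /= andbF addn0 size_nseq.
have -> : forall l : seq bool, drop w.+1 (nseq w true ++ false :: l) = l.
  by move=> l; elim: w {Hw Hxs} => [|w IH] /=; rewrite ?drop0.
apply: split_bitsK => //.
by rewrite size_cat size_nseq /= size_flatten_bits; nia.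
Qed.

Record flood_state := FloodState {
  round : nat; own : seq nat; known : seq (nat * seq nat) }.

Definition lookup (u : nat) (K : seq (nat * seq nat)) : seq nat :=
  (nth (0, [::]) K (find (fun p => p.1 == u) K)).2.

(* The advice of [v] decodes to [[:: n; D; v] ++ nbr G v]; nodes flood the
   adjacency lists they know and output [G] itself, labeled by identity. *)
Definition flood_algo : algo ((pgraph * seq nat) * nat) :=
  @Algo _ flood_state (seq (nat * seq nat))
    (fun _ a => let xs := decode a in FloodState 0 xs [:: (nth 0 xs 2, drop 3 xs)])
    (fun s _ => known s)
    (fun s ms => FloodState (round s).+1 (own s) (known s ++ flatten ms))
    (fun s => let n := nth 0 (own s) 0 in
       if round s == nth 0 (own s) 1 then
         Some ((map (lookup^~ (known s)) (iota 0 n), iota 0 n), nth 0 (own s) 2)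
       else None).

Definition width (n : nat) : nat := (trunc_log 2 n).+1.

Definition flood_advice (n D : nat) (G : pgraph) : advice :=
  fun v => encode (width n) ([:: n; D; v] ++ nbr G v).

Lemma size_flood_advice n D G v : deg G v <= n ->
  size (flood_advice n D G v) <= width n * (n + 4) + 1.
Proof. by rewrite /flood_advice size_encode size_cat /deg /=; nia. Qed.

Section Flooding.

Variables (G : pgraph) (n D : nat).
Hypothesis size_G : gsize G = n.
Hypothesis nbr_lt : forall v, v < n -> all (fun u => u < n) (nbr G v).
Hypothesis D_le_n : D <= n.

Let st r v := state flood_algo G (flood_advice n D G) r v.

Lemma decode_flood_advice v : v < n ->
  decode (flood_advice n D G v) = [:: n; D; v] ++ nbr G v.
Proof.
move=> Hv; have Hn : n < 2 ^ width n by apply: trunc_log_ltn.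
apply: encodeK => //=; rewrite Hn (leq_ltn_trans D_le_n Hn) (ltn_trans Hv Hn) /=.
by apply/allP => u /(allP (nbr_lt Hv)) /= /ltn_trans->.
Qed.

Lemma flood_state_inv r v : v < n ->
  [/\ round (st r v) = r, own (st r v) = [:: n; D; v] ++ nbr G v,
      forall p, p \in known (st r v) -> p.1 < n /\ p.2 = nbr G p.1 &
      forall u, within G v u r -> has (fun p => p.1 == u) (known (st r v))].
Proof.
elim: r v => [|r IH] v Hv.
  rewrite /st /= decode_flood_advice //=; split=> // [p|u /eqP <-]; last by rewrite eqxx.
  by rewrite inE drop0 => /eqP ->.
have [R1 O1 S1 C1] := IH v Hv.
have known_nbr w : w \in nbr G v ->
    forall p, p \in known (st r w) -> p.1 < n /\ p.2 = nbr G p.1.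
  by move=> Hw; have [_ _ S2 _] := IH w (allP (nbr_lt Hv) w Hw).
have reach_nbr w u : w \in nbr G v -> within G w u r ->
    has (fun p => p.1 == u) (known (st r w)).
  by move=> Hw; have [_ _ _ C2] := IH w (allP (nbr_lt Hv) w Hw); apply: C2.
have Est : st r.+1 v = FloodState r.+1 (own (st r v))
    (known (st r v) ++ flatten [seq known (st r w) | w <- nbr G v]) by rewrite /st /= R1.
rewrite Est; split => //= [p|u].
  rewrite mem_cat => /orP [/S1 //|/flattenP [l /mapP [w Hw ->]]].
  exact: known_nbr.
move=> /orP [/C1 Hu|/hasP [w Hw /(reach_nbr _ _ Hw) /hasP [p Hp Hpu]]].
  by rewrite has_cat Hu.
rewrite has_cat; apply/orP; right; apply/hasP; exists p => //.
by apply/flattenP; exists (known (st r w)); [apply/mapP; exists w|].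
Qed.

Lemma lookup_nbr u K : has (fun p => p.1 == u) K ->
  (forall p, p \in K -> p.2 = nbr G p.1) -> lookup u K = nbr G u.
Proof.
move=> Hu HK; have /eqP Hfind := nth_find (0, [::]) Hu.
by rewrite /lookup HK ?Hfind // mem_nth // -has_find.
Qed.

Lemma flood_out r v : v < n -> out flood_algo (st r v) =
  if r == D then Some ((map (lookup^~ (known (st r v))) (iota 0 n), iota 0 n), v)
  else None.
Proof. by move=> Hv; have [R1 O1 _ _] := flood_state_inv r Hv; rewrite /= R1 O1. Qed.

Hypothesis diam_G : forall u v, u < n -> v < n -> within G u v D.

Lemma flood_solves_lab : solves_lab flood_algo G (flood_advice n D G) D.
Proof.
exists G, (iota 0 n), id; split.
- by rewrite size_iota.
- exact: iota_uniq.
- by split => // v _; rewrite map_id.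
rewrite size_G => v Hv; exists D; split => [//||r Hr].
- rewrite -/(st D v) flood_out // eqxx nth_iota //; congr (Some (_, _, _)).
  apply: (@eq_from_nth _ [::]) => [|i]; rewrite size_map size_iota // => Hi.
  have [_ _ S1 C1] := flood_state_inv D Hv.
  rewrite (nth_map 0) ?size_iota // nth_iota // add0n.
  by apply: lookup_nbr => [|p /S1 []//]; apply/C1/diam_G.
- by rewrite -/(st r v) flood_out // (ltn_eqF Hr).
Qed.

End Flooding.

Lemma sufficient_lab_flood n D : D <= n ->
  sufficient_lab n D D (width n * (n + 4) + 1).
Proof.
move=> HD; exists flood_algo => G [Gwf size_G [diam_G _]].
exists (flood_advice n D G); split => [v Hv|].
  by apply: size_flood_advice; rewrite -size_G deg_le_gsize.
apply: flood_solves_lab => // [v|u v]; rewrite -size_G => Hv.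
  by have [[]] := Gwf.1 v Hv.
by apply: diam_G.
Qed.

(** * Lollipop graphs *)

Fixpoint cprod (T : Type) (ls : seq (seq T)) : seq (seq T) :=
  if ls is l :: ls' then [seq x :: y | x <- l, y <- cprod ls'] else [:: [::]].

Lemma size_cprod T (ls : seq (seq T)) : size (cprod ls) = \prod_(l <- ls) size l.
Proof. by elim: ls => [|l ls IH]; rewrite ?big_nil ?big_cons //= size_allpairs IH. Qed.

Lemma mem_cprod (T : eqType) (x0 : T) (ls : seq (seq T)) c : c \in cprod ls ->
  size c = size ls /\ forall j, j < size ls -> nth x0 c j \in nth [::] ls j.
Proof.
elim: ls c => [|l ls IH] c /=; first by rewrite inE => /eqP ->.
move=> /allpairsP [[x y] [Hx Hy ->]] /=.
have [Sy Ny] := IH _ Hy; split=> [|[|j] //= Hj]; [by rewrite Sy | exact: Ny].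
Qed.

Lemma cprod_uniq (T : eqType) (ls : seq (seq T)) : all uniq ls -> uniq (cprod ls).
Proof.
elim: ls => [|l ls IH] //= /andP [Hl Hls].
by apply: allpairs_uniq => [||[x1 y1] [x2 y2] _ _ /= [-> ->]] //; apply: IH.
Qed.

Section Lollipop.

Variables D m : nat.

(* Nodes [0, ..., D - 1] form a path and [D, ..., D + m - 1] a clique, all of
   whose nodes are adjacent to [D - 1].  Clique node [D + j] sees [D - 1] on
   port 0 and the other clique nodes in the order [nth [::] c j]. *)
Definition path_nbr (i : nat) : seq nat :=
  (if i is i'.+1 then [:: i'] else [::]) ++
  (if i.+1 < D then [:: i.+1] else iota D m).

Definition clique_others (j : nat) : seq nat := [seq x <- iota D m | x != D + j].

Definition lollipop (c : seq (seq nat)) : pgraph :=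
  mkseq (fun i => if i < D then path_nbr i else D.-1 :: nth [::] c (i - D)) (D + m).

Definition lollipop_ports (c : seq (seq nat)) : Prop :=
  size c = m /\ forall j, j < m -> perm_eq (nth [::] c j) (clique_others j).

Definition lollipop_adj (u v : nat) : bool :=
  if (u < D) && (v < D) then (u == v.+1) || (v == u.+1)
  else if u < D then u == D.-1
  else if v < D then v == D.-1
  else u != v.

Lemma gsize_lollipop c : gsize (lollipop c) = D + m.
Proof. exact: size_mkseq. Qed.

Lemma nbr_lollipop c i : nbr (lollipop c) i =
  if i < D + m then (if i < D then path_nbr i else D.-1 :: nth [::] c (i - D))
  else [::].
Proof.
rewrite /nbr /lollipop; case: ifP => Hi; first by rewrite nth_mkseq.
by rewrite nth_default // size_mkseq leqNgt Hi.
Qed.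

Lemma mem_clique_others j x :
  (x \in clique_others j) = [&& D <= x, x < D + m & x != D + j].
Proof. by rewrite mem_filter mem_iota; case: (x != D + j); case: (D <= x) => //=; lia. Qed.

Definition port_choices : seq (seq (seq nat)) :=
  cprod [seq permutations (clique_others j) | j <- iota 0 m].

Lemma clique_others_uniq j : uniq (clique_others j).
Proof. by rewrite filter_uniq ?iota_uniq. Qed.

Lemma size_clique_others j : j < m -> size (clique_others j) = m.-1.
Proof.
move=> Hj; rewrite /clique_others -(@rem_filter _ (D + j)) ?iota_uniq //.
rewrite size_rem ?size_iota //.
by rewrite mem_iota; lia.
Qed.

Lemma port_choices_ports c : c \in port_choices -> lollipop_ports c.
Proof.
move=> /(mem_cprod [::]) [Sc Nc]; rewrite size_map size_iota in Sc Nc.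
split=> // j Hj; move: (Nc j Hj).
by rewrite (nth_map 0) ?size_iota // nth_iota // mem_permutations.
Qed.

Lemma size_port_choices : size port_choices = (m.-1)`! ^ m.
Proof.
have -> : (m.-1)`! ^ m = \prod_(j <- iota 0 m) (m.-1)`!.
  by rewrite -(subn0 m) -prod_nat_const_nat /index_iota subn0.
rewrite /port_choices size_cprod big_map; apply: eq_big_seq => j; rewrite mem_iota => Hj.
by rewrite size_permutations ?clique_others_uniq // size_clique_others.
Qed.

Lemma lollipop_inj c c' : lollipop_ports c -> lollipop_ports c' ->
  lollipop c = lollipop c' -> c = c'.
Proof.
move=> [Sc _] [Sc' _] E; apply: (@eq_from_nth _ [::]) => [|j]; first by rewrite Sc Sc'.
rewrite Sc => Hj; have := congr1 (fun G => behead (nbr G (D + j))) E.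
by rewrite /= !nbr_lollipop ltn_add2l Hj ltnNge leq_addr /= addKn.
Qed.

Definition lollipops : seq pgraph := map lollipop port_choices.

Lemma size_lollipops : size lollipops = (m.-1)`! ^ m.
Proof. by rewrite size_map size_port_choices. Qed.

Lemma lollipops_uniq : uniq lollipops.
Proof.
rewrite map_inj_in_uniq => [|c c' /port_choices_ports Hc /port_choices_ports]; last first.
  exact: lollipop_inj.
by apply: cprod_uniq; apply/allP => l /mapP [j _ ->]; apply: permutations_uniq.
Qed.

(* The distance from node 0, truncated at [D]. *)
Definition level (x : nat) : nat := if x < D then x else D.

Hypothesis D_gt0 : 0 < D.

Section Ports.

Variable c : seq (seq nat).
Hypothesis c_ports : lollipop_ports c.

Lemma mem_nbr_lollipop u v :
  (u \in nbr (lollipop c) v) = [&& v < D + m, u < D + m & lollipop_adj v u].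
Proof.
have [_ c_perm] := c_ports; rewrite nbr_lollipop /lollipop_adj.
case: (ltnP v (D + m)) => Hv //; case: (ltnP v D) => HvD /=.
  rewrite /path_nbr mem_cat; case: v Hv HvD => [|v] Hv HvD /=;
  by case: ifP => H1; rewrite ?inE ?mem_iota; case: (ltnP u D) => HuD /=; lia.
rewrite inE (perm_mem (c_perm _ _)) ?mem_clique_others; last lia.
by case: (ltnP u D) => HuD /=; lia.
Qed.

Lemma uniq_nbr_lollipop v : uniq (nbr (lollipop c) v).
Proof.
have [_ c_perm] := c_ports; rewrite nbr_lollipop.
case: ifP => Hv //; case: ifP => HvD.
  rewrite /path_nbr; case: v Hv HvD => [|v] Hv HvD; first by case: ifP; rewrite ?iota_uniq.
  rewrite cat_uniq /=; case: ifP => H /=; first by rewrite !inE; lia.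
  by rewrite iota_uniq andbT; apply/hasPn => x; rewrite mem_iota inE; lia.
have Hj : v - D < m by lia.
rewrite cons_uniq (perm_uniq (c_perm _ Hj)) (perm_mem (c_perm _ Hj)) mem_clique_others.
by rewrite filter_uniq ?iota_uniq // andbT; lia.
Qed.

Lemma within1_lollipop u v : u < D + m -> v < D + m -> lollipop_adj u v ->
  within (lollipop c) u v 1.
Proof. by move=> Hu Hv Huv; apply: within1; rewrite mem_nbr_lollipop Hu Hv. Qed.

Lemma lollipop_sym u v : v \in nbr (lollipop c) u -> u \in nbr (lollipop c) v.
Proof.
rewrite !mem_nbr_lollipop /lollipop_adj.
by case: (ltnP u D); case: (ltnP v D) => /=; lia.
Qed.

Lemma level_within u v k : within (lollipop c) u v k -> level v <= level u + k.
Proof.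
elim: k u => [|k IH] u /=; first by move/eqP->; rewrite addn0.
move=> /orP [/IH Hv|/hasP [w Hw /IH Hv]]; first lia.
move: Hw Hv; rewrite mem_nbr_lollipop /lollipop_adj /level.
by case: (ltnP u D); case: (ltnP w D) => /=; lia.
Qed.

Lemma within_lollipop_lt u v k : within (lollipop c) u v k -> u < D + m -> v < D + m.
Proof.
elim: k u => [|k IH] u /=; first by move/eqP->.
move=> /orP [/IH //|/hasP [w Hw /IH Hv]] Hu.
by apply: Hv; move: Hw; rewrite mem_nbr_lollipop => /and3P [].
Qed.

Lemma path_within i k : i + k < D -> within (lollipop c) i (i + k) k.
Proof.
elim: k => [|k IH] Hik; first by rewrite addn0 /= eqxx.
rewrite -addn1 addnA; apply: within_trans (IH _) _; first lia.
by apply: within1_lollipop; rewrite /lollipop_adj; repeat case: ifP; lia.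
Qed.

Lemma lollipop_within_D u v : u < D + m -> v < D + m -> within (lollipop c) u v D.
Proof.
wlog Huv : u v / u <= v => [W Hu Hv|Hu Hv].
  by case: (leqP u v) => [|/ltnW] Huv; [|apply: (within_sym lollipop_sym)]; apply: W.
case: (ltnP v D) => HvD.
  have := path_within (i := u) (k := v - u) ltac:(lia).
  by rewrite subnKC //; apply: within_mono; lia.
case: (ltnP u D) => HuD.
  have Hup := path_within (i := u) (k := D.-1 - u) ltac:(lia).
  have Hstep : within (lollipop c) (u + (D.-1 - u)) v 1.
    by apply: within1_lollipop; rewrite /lollipop_adj; repeat case: ifP; lia.
  by apply: within_mono (within_trans Hup Hstep); lia.
case: (eqVneq u v) => [->|Hneq]; first exact: within_refl.
apply: within_mono (within1_lollipop Hu Hv _); first lia.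
by rewrite /lollipop_adj; repeat case: ifP; lia.
Qed.

Lemma lollipop_in_class : 0 < m -> in_class (D + m) D (lollipop c).
Proof.
move=> m_gt0; have Hsz := gsize_lollipop c; split => //.
- split; last by exists D => u v; rewrite Hsz; apply: lollipop_within_D.
  move=> v; rewrite Hsz => Hv; split=> [|||u _].
  + by apply/allP => u; rewrite mem_nbr_lollipop => /and3P [].
  + exact: uniq_nbr_lollipop.
  + by rewrite mem_nbr_lollipop /lollipop_adj; repeat case: ifP; lia.
  + by apply/idP/idP; apply: lollipop_sym.
- split=> [u v|D' HD']; rewrite Hsz; first exact: lollipop_within_D.
  exists 0, D; split; [lia | lia | apply/negP => /level_within].
  by rewrite /level ltnn D_gt0; lia.
Qed.

Lemma near0_on_path u : within (lollipop c) 0 u D.-1 -> u < D.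
Proof. by move/level_within; rewrite /level D_gt0; case: ifP => //; lia. Qed.

End Ports.

(* Seen from node 0 within [D] rounds, the port orders inside the clique are
   invisible: the only edges leaving the path enter the clique on port 0. *)
Lemma state_lollipop0 Out (A : algo Out) c c' adv adv' r :
  lollipop_ports c -> lollipop_ports c' -> r <= D ->
  (forall u, u < D + m -> adv u = adv' u) ->
  state A (lollipop c) adv r 0 = state A (lollipop c') adv' r 0.
Proof.
move=> Hc Hc' Hr Hadv.
apply: (@state_local _ A _ _ adv adv' 0 D) => // [u Hu|u _|u Hu|u w Hu Hw].
- by rewrite !nbr_lollipop (near0_on_path Hc Hu).
- rewrite /deg !nbr_lollipop; case: ifP => // H1; case: ifP => //= H2.
  by rewrite (perm_size (Hc.2 _ _)) ?(perm_size (Hc'.2 _ _)) //; lia.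
- by apply/Hadv/(within_lollipop_lt Hc Hu); lia.
- have HuD := near0_on_path Hc Hu.
  move: Hw; rewrite mem_nbr_lollipop // => /and3P [_ Hw Huw].
  rewrite !nbr_lollipop Hw; case: ifP => //= HwD.
  by move: Huw; rewrite /lollipop_adj HuD HwD /= => /eqP ->; rewrite eqxx.
Qed.

End Lollipop.

(** * Counting views *)

Lemma uniq_size_le_code (T : eqType) (F : seq T) (P : T -> nat -> Prop) B :
  uniq F -> (forall x, x \in F -> exists2 k, k < B & P x k) ->
  (forall x y k, x \in F -> y \in F -> P x k -> P y k -> x = y) -> size F <= B.
Proof.
move=> F_uniq F_code P_inj.
have [f Hf] : exists f : T -> nat, forall x, x \in F -> f x < B /\ P x (f x).
  elim: F {F_uniq P_inj} F_code => [|x F IH] F_code; first by exists (fun=> 0).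
  have [f Hf] := IH (fun y Hy => F_code y (mem_behead (s := x :: F) Hy)).
  have [k Hk Pk] := F_code x (mem_head x F).
  exists (fun y => if y == x then k else f y) => y.
  by rewrite inE; case: eqP => [->|_] //= /Hf.
rewrite -(size_map f) -(size_iota 0 B); apply: uniq_leq_size.
  rewrite map_inj_in_uniq // => x y Hx Hy Exy.
  by apply: (P_inj x y (f x)) => //; [apply: (Hf x Hx).2 | rewrite Exy; apply: (Hf y Hy).2].
by move=> k /mapP [x Hx ->]; rewrite mem_iota (Hf x Hx).1.
Qed.

(* The leading 1 makes the length of [bs] recoverable. *)
Definition bitstring_nat (bs : seq bool) : nat := foldr (fun (b : bool) k => b + k.*2) 1 bs.

Lemma bitstring_nat_lt bs : 0 < bitstring_nat bs < 2 ^ (size bs).+1.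
Proof. by elim: bs => //= b bs IH; rewrite expnS; case: b => /=; lia. Qed.

Lemma bitstring_nat_inj : injective bitstring_nat.
Proof.
elim=> [|b1 bs1 IH] [|b2 bs2] //=.
- by have := bitstring_nat_lt bs2; case: b2 => /=; lia.
- by have := bitstring_nat_lt bs1; case: b1 => /=; lia.
move=> E; have Eb : b1 = b2 by move: E; case: b1; case: b2 => //=; lia.
by subst b2; congr (_ :: _); apply: IH; move: E; case: b1 => /=; lia.
Qed.

Lemma digit_split_inj R a b a' b' : a < R -> a' < R ->
  a + R * b = a' + R * b' -> a = a' /\ b = b'.
Proof.
move=> Ha Ha' E; have Ea : a = a'.
  by move/(congr1 (modn^~ R)): E; rewrite !(addnC _ (R * _)) !(mulnC R) !modnMDl !modn_small.
by split=> //; subst a'; apply/eqP; rewrite -(eqn_pmul2l (_ : 0 < R)); [apply/eqP; lia | lia].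
Qed.

Definition digits_val (R : nat) (xs : seq nat) : nat := foldr (fun x k => x + R * k) 0 xs.

Lemma digits_val_lt R xs : all (fun x => x < R) xs -> digits_val R xs < R ^ size xs.
Proof. by elim: xs => [|x xs IH] //= /andP [Hx /IH Hxs]; rewrite expnS; nia. Qed.

Lemma digits_val_inj R xs ys : size xs = size ys ->
  all (fun x => x < R) xs -> all (fun y => y < R) ys ->
  digits_val R xs = digits_val R ys -> xs = ys.
Proof.
elim: xs ys => [|x xs IH] [|y ys] //= [Sxy] /andP [Hx Hxs] /andP [Hy Hys] E.
by have [-> /IH ->] := digit_split_inj Hx Hy E.
Qed.

Lemma iso_map_eq G G' H f f' : wf_pgraph G -> wf_pgraph G' ->
  iso_map G H f -> iso_map G' H f' ->
  (forall u, u < gsize G -> f u = f' u) -> G = G'.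
Proof.
move=> [Gwf _] [Gwf' _] [SG _ f_inj f_nbr] [SG' _ _ f_nbr'] Eff'.
have Sn : gsize G' = gsize G by rewrite SG SG'.
apply: (@eq_from_nth _ [::]) => [|u Hu]; first exact/esym.
have Hu' : u < gsize G' by rewrite Sn.
have [nbr_lt _ _ _] := Gwf u Hu; have [nbr_lt' _ _ _] := Gwf' u Hu'.
apply: (@inj_in_map _ _ f [pred x | x < gsize G]) => [x y|||]; first exact: f_inj.
- exact: nbr_lt.
- by move: nbr_lt'; rewrite Sn.
- rewrite f_nbr // Eff' // -f_nbr' ?Sn //; apply/eq_in_map => x Hx.
  by rewrite Eff' // -Sn (allP nbr_lt' x Hx).
Qed.

Section Views.

Variables n s : nat.

(* Encodes the advice of all nodes and the isomorphism onto the output of node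
   0; by locality these determine a lollipop graph. *)
Definition view_code (adv : advice) (f : nat -> nat) : nat :=
  digits_val n (map f (iota 0 n)) +
  n ^ n * digits_val (2 ^ s.+1) (map (bitstring_nat \o adv) (iota 0 n)).

Lemma iso_digits G H f : gsize G = n -> iso_map G H f ->
  all (fun x => x < n) (map f (iota 0 n)).
Proof.
move=> SG [SGH f_lt _ _]; apply/allP => x /mapP [u]; rewrite mem_iota => Hu ->.
by rewrite -SG SGH f_lt // SG.
Qed.

Lemma advice_digits G adv : gsize G = n -> advice_size_le G adv s ->
  all (fun x => x < 2 ^ s.+1) (map (bitstring_nat \o adv) (iota 0 n)).
Proof.
move=> SG Hadv; apply/allP => x /mapP [u]; rewrite mem_iota => Hu ->.
have /andP [_ Hlt] := bitstring_nat_lt (adv u).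
by apply: leq_trans Hlt _; rewrite leq_exp2l // ltnS Hadv // SG.
Qed.

Lemma iso_digits_val_lt G H f : gsize G = n -> iso_map G H f ->
  digits_val n (map f (iota 0 n)) < n ^ n.
Proof.
by move=> SG Hf; have := digits_val_lt (iso_digits SG Hf); rewrite size_map size_iota.
Qed.

Lemma view_code_lt G H adv f : gsize G = n -> advice_size_le G adv s ->
  iso_map G H f -> view_code adv f < n ^ n * (2 ^ s.+1) ^ n.
Proof.
move=> SG Hadv Hf; have := iso_digits_val_lt SG Hf.
have := digits_val_lt (advice_digits SG Hadv).
by rewrite size_map size_iota /view_code; nia.
Qed.

Lemma view_code_inj G G' H H' adv adv' f f' :
  gsize G = n -> gsize G' = n -> advice_size_le G adv s -> advice_size_le G' adv' s ->
  iso_map G H f -> iso_map G' H' f' -> view_code adv f = view_code adv' f' ->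
  forall u, u < n -> f u = f' u /\ adv u = adv' u.
Proof.
move=> SG SG' Hadv Hadv' Hf Hf' E u Hu.
have [Ef Eadv] := digit_split_inj (iso_digits_val_lt SG Hf) (iso_digits_val_lt SG' Hf') E.
move/(digits_val_inj _ (iso_digits SG Hf) (iso_digits SG' Hf')): Ef.
move/(digits_val_inj _ (advice_digits SG Hadv) (advice_digits SG' Hadv')): Eadv.
rewrite !size_map => /(_ erefl) /eq_in_map Eadv /(_ erefl) /eq_in_map Ef.
have Hu0 : u \in iota 0 n by rewrite mem_iota.
by split; [apply: Ef | apply: bitstring_nat_inj; apply: Eadv].
Qed.

End Views.

Lemma lollipops_count D m s : 0 < D -> 0 < m -> sufficient_anon (D + m) D D s ->
  size (lollipops D m) <= (D + m) ^ (D + m) * (2 ^ s.+1) ^ (D + m).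
Proof.
move=> D_gt0 m_gt0 [A HA]; set n := D + m.
pose P G k := exists adv H f, [/\ advice_size_le G adv s,
  outputs_within A G adv D 0 H, iso_map G H f & k = view_code n s adv f].
apply: (@uniq_size_le_code _ _ P); first exact: lollipops_uniq.
  move=> _ /mapP [c /port_choices_ports Hc ->].
  have Gcls := lollipop_in_class D_gt0 Hc m_gt0; have [_ SG _] := Gcls.
  have [adv [Hadv Hsol]] := HA _ Gcls.
  have [H [Ho [f Hf]]] := Hsol 0 ltac:(rewrite SG; lia).
  by exists (view_code n s adv f); [apply: view_code_lt Hf | exists adv, H, f].
move=> _ _ k /mapP [c /port_choices_ports Hc ->] /mapP [c' /port_choices_ports Hc' ->].
move=> [adv [H [f [Hadv Ho Hf ->]]]] [adv' [H' [f' [Hadv' Ho' Hf' Ecode]]]].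
have [Gwf SG _] := lollipop_in_class D_gt0 Hc m_gt0.
have [Gwf' SG' _] := lollipop_in_class D_gt0 Hc' m_gt0.
have Eview := view_code_inj SG SG' Hadv Hadv' Hf Hf' Ecode.
have EH : H = H'.
  apply: (outputs_within_det _ Ho Ho') => r Hr.
  by rewrite (state_lollipop0 D_gt0 A (adv' := adv') Hc Hc' Hr) // => u /Eview [].
subst H'; apply: iso_map_eq Gwf Gwf' Hf Hf' _ => u; rewrite SG.
by move/Eview => [].
Qed.

Lemma fact_expn_le a b : a ^ b * a`! <= (a + b)`!.
Proof.
elim: b => [|b IH]; first by rewrite expn0 mul1n addn0.
by rewrite expnS addnS factS -mulnA leq_mul // ltnW // ltnS leq_addr.
Qed.

Lemma half_expn_le_fact k : k./2 ^ k./2 <= k`!.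
Proof.
rewrite [in X in _ <= X](_ : k = k./2 + (k - k./2)); last lia.
have : k./2 <= k - k./2 by lia.
case: k./2 => [|h] Hh; first by rewrite fact_gt0.
apply: leq_trans (fact_expn_le _ _); apply: leq_trans (leq_pmulr _ (fact_gt0 _)).
by rewrite leq_pexp2l.
Qed.

Lemma anon_advice_count D m s : 0 < D -> 0 < m -> sufficient_anon (D + m) D D s ->
  (m.-1)./2 ^ ((m.-1)./2 * m) <= (D + m) ^ (D + m) * 2 ^ (s.+1 * (D + m)).
Proof.
move=> D_gt0 m_gt0 Hs; rewrite !expnM.
apply: leq_trans (lollipops_count D_gt0 m_gt0 Hs); rewrite size_lollipops.
by rewrite leq_exp2r // half_expn_le_fact.
Qed.

(** * Asymptotics *)

Local Open Scope R_scope.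

Lemma INR_addn a b : INR (a + b)%N = INR a + INR b.
Proof. exact: plus_INR. Qed.

Lemma INR_muln a b : INR (a * b)%N = INR a * INR b.
Proof. exact: mult_INR. Qed.

Lemma INR_expn a k : INR (a ^ k)%N = INR a ^ k.
Proof. by elim: k => [|k IH]; rewrite ?expn0 // expnS INR_muln IH. Qed.

Lemma leq_INR a b : (a <= b)%N -> INR a <= INR b.
Proof. by move/leP; apply: le_INR. Qed.

Lemma INR_leq a b : INR a <= INR b -> (a <= b)%N.
Proof. by move/INR_le/leP. Qed.

Lemma ln_le x y : 0 < x -> x <= y -> ln x <= ln y.
Proof. by move=> Hx [Hxy|->]; [left; apply: ln_increasing | right]. Qed.

Lemma ln2_pos : 0 < ln 2.
Proof. by have := ln_lt_2; lra. Qed.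

Lemma ln_expn_le (a b n k : nat) : (0 < a)%N -> (0 < n)%N ->
  (a ^ b <= n ^ n * 2 ^ k)%N ->
  INR b * ln (INR a) <= INR n * ln (INR n) + INR k * ln 2.
Proof.
move=> /leq_INR /= Ha /leq_INR /= Hn /leq_INR.
rewrite INR_muln !INR_expn (_ : INR 2 = 2) => [Hle|]; last by rewrite /=; lra.
have Ha0 : 0 < INR a by lra.
have Hn0 : 0 < INR n by lra.
move: (ln_le (pow_lt _ b Ha0) Hle).
by rewrite ln_mult ?ln_pow //; try apply: pow_lt; lra.
Qed.

Lemma trunc_log_le_ln n : (0 < n)%N -> INR (trunc_log 2 n) * ln 2 <= ln (INR n).
Proof.
move=> Hn; have Hpow : (2 ^ trunc_log 2 n <= n)%N by apply: trunc_logP.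
rewrite -ln_pow; last lra.
by apply: ln_le; [apply: pow_lt; lra | rewrite -(INR_expn 2); apply: leq_INR].
Qed.

Lemma size_flood_advice_nlogn n : (2 <= n)%N ->
  INR (width n * (n + 4) + 1) <= 16 * nlogn n.
Proof.
move=> Hn; have Hn2 : 2 <= INR n by apply: (leq_INR Hn).
have Hl2 := ln2_pos.
have Ht := trunc_log_le_ln (ltnW Hn).
have Hl : ln 2 <= ln (INR n) by apply: ln_le; lra.
have HtL : INR (trunc_log 2 n) <= ln (INR n) / ln 2.
  by apply: (Rmult_le_reg_r (ln 2)) => //; rewrite /Rdiv Rmult_assoc Rinv_l; lra.
have HL : 1 <= ln (INR n) / ln 2.
  by apply: (Rmult_le_reg_r (ln 2)) => //; rewrite /Rdiv Rmult_assoc Rinv_l; lra.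
rewrite /nlogn /width INR_addn INR_muln INR_addn S_INR /=.
have Ht0 := pos_INR (trunc_log 2 n).
set L := ln (INR n) / ln 2 in HtL HL *; set t := INR _ in Ht0 HtL *.
have : (t + 1) * (INR n + (1 + 1 + 1 + 1)) <= (L + 1) * (INR n + 4).
  by apply: Rmult_le_compat; lra.
nra.
Qed.

(* Since [h >= b N / 4] and [h^2 >= N], the left-hand side of [count] is at
   least [b^2 N^2 ln N / 8]. *)
Lemma lower_bound_real (b N M h S : R) : 0 < b <= 1 -> 32 <= N * b * b ->
  b * N <= M -> M - 2 <= 2 * h ->
  h * M * ln h <= N * ln N + (S + 1) * N * ln 2 ->
  b * b / 16 * (N * (ln N / ln 2)) <= S.
Proof.
move=> [Hb0 Hb1] HN HM Hh count.
have HbN : 32 <= b * N by nra.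
have HN0 : 2 <= N by nra.
have Hh4 : b * N / 4 <= h by lra.
have Hl2 := ln2_pos.
have HlN : ln 2 <= ln N by apply: ln_le; lra.
have Hlh : ln N / 2 <= ln h.
  suff : ln N <= ln (h ^ 2) by rewrite ln_pow /=; lra.
  by apply: ln_le; [lra | nra].
have P1 : b * N / 4 * (b * N) * (ln N / 2) <= h * M * ln h.
  by apply: Rmult_le_compat; try nra; apply: Rmult_le_compat; lra.
have P2 : b * b * N * ln N / 8 <= ln N + (S + 1) * ln 2.
  have : N * (b * b * N * ln N / 8) <= N * (ln N + (S + 1) * ln 2) by nra.
  by move/Rmult_le_reg_l; apply; lra.
have P3 : b * b * N * ln N / 16 <= S * ln 2 by nra.
have -> : b * b / 16 * (N * (ln N / ln 2)) = b * b * N * ln N / 16 / ln 2 by field; lra.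
by apply: (Rmult_le_reg_r (ln 2)) => //; rewrite /Rdiv Rmult_assoc Rinv_l; lra.
Qed.

Lemma anon_lower_bound (b : R) n D s : 0 < b <= 1 -> 32 <= INR n * b * b ->
  (0 < D)%N -> b * INR n <= INR (n - D) -> sufficient_anon n D D s ->
  b * b / 16 * nlogn n <= INR s.
Proof.
move=> Hb HN D_gt0 Hm Hs; set m := (n - D)%N in Hm.
have m_ge32 : (32 <= m)%N by apply: INR_leq; rewrite /=; nra.
have En : n = (D + m)%N by rewrite /m; lia.
rewrite En in Hs; set h := (m.-1)./2.
have m_gt0 : (0 < m)%N by lia.
have h_gt0 : (0 < h)%N by rewrite /h; lia.
have Hcount := anon_advice_count D_gt0 m_gt0 Hs.
have := ln_expn_le h_gt0 (ltn_addr m D_gt0) Hcount.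
rewrite -En !INR_muln S_INR => Hln.
apply: (lower_bound_real Hb HN Hm (h := INR h)) Hln.
have : (m <= 2 * h + 2)%N by rewrite /h; lia.
by move/leq_INR; rewrite INR_addn INR_muln /=; lra.
Qed.

Theorem corollary5p5 :
  forall alpha : R, 0 < alpha < 1 ->
  exists c1 c2 : R, 0 < c1 /\ 0 < c2 /\
  exists n0 : nat, forall n D : nat,
    (n0 <= n)%N -> (1 <= D)%N -> INR D <= alpha * INR n ->
    (exists s : nat, INR s <= c2 * nlogn n /\ sufficient_lab n D D s) /\
    (forall s : nat, sufficient_anon n D D s -> c1 * nlogn n <= INR s).
Proof.
move=> alpha [alpha_gt0 alpha_lt1]; set b := 1 - alpha.
have Hb : 0 < b <= 1 by rewrite /b; lra.
exists (b * b / 16), 16; split; [nra | split; first lra].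
have [n0 Hn0] := INR_archimed (b * b) 32 (ltac:(nra) : b * b > 0).
exists n0 => n D /leq_INR Hn D_gt0 HDn.
have HN : 32 <= INR n * b * b by nra.
have HD : (D <= n)%N by apply: INR_leq; nra.
split.
- exists (width n * (n + 4) + 1)%N; split; last exact: sufficient_lab_flood.
  by apply: size_flood_advice_nlogn; apply: INR_leq; rewrite /=; nra.
- move=> s; apply: anon_lower_bound => //.
  by rewrite minus_INR; [rewrite /b; lra | apply/leP].
Qed.
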